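(* Let $G$ be an execution graph, $T$ a thread and $q$ an await-iteration index of $T$ in $G$. If $t\in[\mathit{start}_G^T(q):\mathit{end}_G^T(q))$, then $P_T(k_G^T(t))$ is not an $\mathtt{await}$ statement.
   Context: Programs. There are finite sets $\mathit{Register}$, $\mathit{Value}$, $\mathit{Location}$; $\mathit{State}=\mathit{Register}\to\mathit{Value}$; an update is a partial map $\mathit{Register}\rightharpoonup\mathit{Value}$, and $(\sigma\ll\mu)(r)=\mu(r)$ if $r\in\mathrm{Dom}(\mu)$, else $\sigma(r)$. Events are reads $R^m(x)$, writes $W^m(x,v)$, fences $F^m$, error $E$. A program consists of finitely many threads $T$, each with a finite statement sequence $P_T(0),\dots,P_T(|P_T|-1)$. A statement is $\mathtt{step}(\epsilon,\delta)$ with $\epsilon:\mathit{State}\to\mathit{Event}$, $\delta:\mathit{State}\times(\mathit{Value}\cup\{\bot\})\to\mathit{Update}$, or $\mathtt{await}(n,\kappa)$ with $n\in\mathbb N$, $\kappa:\mathit{State}\to\{0,1\}$. Syntactic restriction: if $P_T(k)=\mathtt{await}(n,\cdot)$ then $n\le k$ and no $P_T(k')$ with $k'\in[k-n:k)$ is an await. ($[a:b)=\{a,\dots,b-1\}$.) An execution graph $G$ has a set $G.\mathrm E$ of triples $\langle T,t,e\rangle$ and a partial reads-from map $G.\mathrm{rf}$ from reads to writes. Thread-local semantics: $k_G^T(0)=0$, $\sigma_G^T(0)$ fixed; if $k_G^T(t)\ge|P_T|$ or no triple $\langle T,t,\cdot\rangle$ is in $G.\mathrm E$, execution stops ($N_G^T=t$).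 Otherwise with $S=P_T(k_G^T(t))$: $e_G^T(t)=\epsilon(\sigma_G^T(t))$ for $S=\mathtt{step}(\epsilon,\cdot)$, $F^{\mathrm{rlx}}$ for an await; $v_G^T(t)$ is the value of the write that $G.\mathrm{rf}$ assigns to $\langle T,t,e_G^T(t)\rangle$ if this is a read with defined rf, else $\bot$. For a step: $k_G^T(t+1)=k_G^T(t)+1$; if $e_G^T(t)$ is a read with $v_G^T(t)=\bot$ then $N_G^T=t+1$, $\sigma_G^T(t+1)=\sigma_G^T(t)$, else $\sigma_G^T(t+1)=\sigma_G^T(t)\ll\delta(\sigma_G^T(t),v_G^T(t))$. For $\mathtt{await}(n,\kappa)$: $\sigma_G^T(t+1)=\sigma_G^T(t)$ and $k_G^T(t+1)=k_G^T(t)+1$ if $\kappa(\sigma_G^T(t))=0$, else $k_G^T(t)-n$. Awaits: $\mathit{end}_G^T(0)<\mathit{end}_G^T(1)<\cdots$ enumerate the steps $t$ (with $t<N_G^T$) at which $P_T(k_G^T(t))$ is an await; $\mathit{len}_G^T(q)=n$ where $P_T(k_G^T(\mathit{end}_G^T(q)))=\mathtt{await}(n,\cdot)$; $\mathit{start}_G^T(q)=\mathit{end}_G^T(q)-\mathit{len}_G^T(q)$. *)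

From mathcomp Require Import all_boot.
Set Implicit Arguments. Unset Strict Implicit. Unset Printing Implicit Defensive.

Inductive Mode := na | rlx | acq | rel | acqrel | sc.

Section Semantics.
Variables (Register Value Location Thread : finType).

Definition State := Register -> Value.
Definition Update := Register -> option Value.

Definition override (s : State) (mu : Update) : State :=
  fun r => match mu r with Some v => v | None => s r end.

Inductive Event :=
| Read of Mode & Location
| Write of Mode & Location & Value
| Fence of Mode
| Error.

Inductive Stmt :=
| step of (State -> Event) & (State -> option Value -> Update)
| await of nat & (State -> bool).

Definition is_await (S : Stmt) : bool :=
  match S with await _ _ => true | _ => false end.

Record Program := { prog : Thread -> seq Stmt; init : Thread -> State }.

Definition wf_program (P : Program) : Prop :=
  forall T k n kap, onth (prog P T) k = Some (await n kap) ->
    n <= k /\ (forall k', k - n <= k' < k ->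
                 forall S, onth (prog P T) k' = Some S -> ~~ is_await S).

(* Execution graph: a set of triples <T,t,e> and a partial reads-from map
   sending (read) triples to write triples <T',t',W^m(x,v)>. *)
Record Graph := {
  gE : Thread -> nat -> Event -> Prop;
  grf : Thread -> nat -> Event -> option (Thread * nat * (Mode * Location * Value))
}.

Variables (P : Program) (G : Graph) (T : Thread).

Definition valOf (t : nat) (e : Event) : option Value :=
  match e with
  | Read _ _ => match grf G T t e with Some (_, _, (_, _, v)) => Some v | None => None end
  | _ => None
  end.

(* (k_G^T(t), sigma_G^T(t)); meaningful for t <= N_G^T. *)
Fixpoint cfg (t : nat) : nat * State :=
  match t with
  | 0 => (0, init P T)
  | t'.+1 =>
    let (k, s) := cfg t' in
    match onth (prog P T) k with
    | None => (k, s)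
    | Some (step eps del) =>
        let e := eps s in
        let v := valOf t' e in
        (k.+1, match e, v with
               | Read _ _, None => s
               | _, _ => override s (del s v)
               end)
    | Some (await n kap) => if kap s then (k - n, s) else (k.+1, s)
    end
  end.

Definition kG (t : nat) : nat := (cfg t).1.
Definition sigmaG (t : nat) : State := (cfg t).2.

Definition stmt_at (k : nat) : option Stmt := onth (prog P T) k.

Definition evG (t : nat) : Event :=
  match stmt_at (kG t) with
  | Some (step eps _) => eps (sigmaG t)
  | Some (await _ _) => Fence rlx
  | None => Error
  end.

(* step t is a step-statement reading bot, which makes N_G^T = t+1 *)
Definition read_bot (t : nat) : Prop :=
  (exists eps del, stmt_at (kG t) = Some (step eps del)) /\
  (exists m x, evG t = Read m x) /\ valOf t (evG t) = None.

(* t < N_G^T *)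
Definition running (t : nat) : Prop :=
  forall t', t' <= t ->
    [/\ kG t' < size (prog P T),
        (exists e, gE G T t' e) &
        (t' < t -> ~ read_bot t')].

Definition await_step (t : nat) : Prop :=
  running t /\ exists n kap, stmt_at (kG t) = Some (await n kap).

(* is_end q t  <->  end_G^T(q) = t *)
Fixpoint is_end (q t : nat) : Prop :=
  match q with
  | 0 => await_step t /\ forall t', t' < t -> ~ await_step t'
  | q'.+1 => await_step t /\
      exists t0, [/\ is_end q' t0, t0 < t &
                     forall t', t0 < t' < t -> ~ await_step t']
  end.

Definition await_len (t : nat) : nat :=
  match stmt_at (kG t) with Some (await n _) => n | _ => 0 end.

(* start_G^T(q) = end_G^T(q) - len_G^T(q), given end_G^T(q) = te *)
Definition startG (te : nat) : nat := te - await_len te.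

End Semantics.

From mathcomp Require Import all_boot.
From mathcomp Require Import zify.

Set Implicit Arguments.
Unset Strict Implicit.
Unset Printing Implicit Defensive.

(* Let [te] execute [await(n0, _)] at program position [k] and suppose some
   step in [te - n0, te) also executes an await; let [t] be the last one, at
   position [j].  Between [t] and [te] the program counter advances by one per
   step, so [k] is either [j + (te - t)] (the await at [j] fell through) or
   [j - n + (te - t - 1)] (it jumped back by its length [n]).  Either one of
   the two awaits lies inside the window of the other, contradicting the
   syntactic restriction, or they are the same statement, whose length would
   then be both [te - t - 1] and at least [te - t]. *)

Lemma last_in_range (p : pred nat) t te :
  t < te -> p t ->
  exists2 s, t <= s < te & p s /\ forall s', s < s' < te -> ~~ p s'.
Proof.
move=> lt_t p_t; pose q s := (t <= s < te) && p s.
have ex_q : exists s, q s by exists t; rewrite /q leqnn lt_t.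
have ub_q s : q s -> s <= te by case/andP=> /andP[_ /ltnW].
case: (ex_maxnP ex_q ub_q) => s /andP[range_s p_s] max_s.
exists s => //; split=> // s' /andP[gt_s' lt_s']; apply/negP => p_s'.
have [ge_s _] := andP range_s.
by have := max_s s'; rewrite /q p_s' lt_s' (leq_trans ge_s (ltnW gt_s')) leqNgt gt_s' => /(_ isT).
Qed.

Section AwaitWindow.
Variables (Register Value Location Thread : finType).
Variables (P : Program Register Value Location Thread)
  (G : Graph Value Location Thread) (T : Thread).

Definition await_at (t : nat) : bool :=
  if stmt_at P T (kG P G T t) is Some (await _ _) then true else false.

Lemma await_atP t :
  reflect (exists n kap, stmt_at P T (kG P G T t) = Some (@await Register Value Location n kap))
          (await_at t).
Proof.
rewrite /await_at; case: (stmt_at _ _) => [[e d|n kap]|]; constructor.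
- by case=> n [kap].
- by exists n, kap.
- by case=> n [kap].
Qed.

Lemma kG_step t eps del :
  stmt_at P T (kG P G T t) = Some (@step Register Value Location eps del) ->
  kG P G T t.+1 = (kG P G T t).+1.
Proof. by rewrite /stmt_at /kG /=; case: (cfg P G T t) => k s /= ->. Qed.

Lemma kG_await t n kap :
  stmt_at P T (kG P G T t) = Some (@await Register Value Location n kap) ->
  kG P G T t.+1 = if kap (sigmaG P G T t) then kG P G T t - n else (kG P G T t).+1.
Proof.
by rewrite /stmt_at /kG /sigmaG /=; case: (cfg P G T t) => k s /= ->; case: (kap s).
Qed.

Lemma kG_await_free te s :
  running P G T te -> s <= te -> (forall s', s <= s' < te -> ~~ await_at s') ->
  kG P G T te = kG P G T s + (te - s).
Proof.
move=> run_te; elim: te s run_te => [|te IH] s run_te.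
  by rewrite leqn0 => /eqP-> _; rewrite addn0.
rewrite leq_eqVlt => /orP[/eqP-> _|s_le_te free]; first by rewrite subnn addn0.
have run_prev : running P G T te.
  move=> t' le_t'; have [? ? not_bot] := run_te t' (leqW le_t').
  by split=> // lt_t'; apply: not_bot; apply: ltnW.
rewrite subSn // addnS -IH //; last by move=> s' /andP[? ?]; apply: free; lia.
have [k_lt _ _] := run_te te (leqnSn te).
have free_te : ~~ await_at te by apply: free; lia.
move: k_lt free_te; rewrite -onthTE /await_at /stmt_at.
case E: (onth _ _) => [[eps del|n kap]|] // _ _.
exact: kG_step E.
Qed.

Hypothesis wfP : wf_program P.

Lemma await_outside_window k n kap j n' kap' :
  stmt_at P T k = Some (@await Register Value Location n kap) ->
  stmt_at P T j = Some (@await Register Value Location n' kap') ->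
  j < k -> j < k - n.
Proof.
move=> aw_k aw_j lt_jk; have [_ no_await] := wfP aw_k.
rewrite ltnNge; apply/negP => le_j.
by move: (no_await j (andb_true_intro (conj le_j lt_jk)) _ aw_j).
Qed.

Lemma no_last_await_in_window te n0 kap0 t :
  running P G T te ->
  stmt_at P T (kG P G T te) = Some (@await Register Value Location n0 kap0) ->
  te - n0 <= t < te -> await_at t ->
  (forall s, t < s < te -> ~~ await_at s) -> False.
Proof.
move=> run_te aw_k /andP[ge_t lt_t] /await_atP[n [kap aw_j]] last_t.
have [n0_le_k _] := wfP aw_k.
have [n_le_j _] := wfP aw_j.
have := kG_await_free run_te lt_t last_t; rewrite (kG_await aw_j).
set k := kG P G T te in aw_k n0_le_k *; set j := kG P G T t in aw_j n_le_j *.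
case: (kap _) => def_k.
- case: (ltngtP j k) => [lt_jk|lt_kj|eq_jk].
  + by have := await_outside_window aw_k aw_j lt_jk; lia.
  + by have := await_outside_window aw_j aw_k lt_kj; lia.
  + by move: aw_k; rewrite -eq_jk aw_j => -[eq_n _]; lia.
- have lt_jk : j < k by lia.
  by have := await_outside_window aw_k aw_j lt_jk; lia.
Qed.

End AwaitWindow.

Lemma is_end_await_step (Register Value Location Thread : finType)
  (P : Program Register Value Location Thread)
  (G : Graph Value Location Thread) (T : Thread) q te :
  is_end P G T q te -> await_step P G T te.
Proof. by case: q => [|q] []. Qed.

Theorem lemma2 (Register Value Location Thread : finType)
  (P : Program Register Value Location Thread)
  (G : Graph Value Location Thread) (T : Thread) (q te t : nat) :
  wf_program P ->
  is_end P G T q te ->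
  startG P G T te <= t < te ->
  forall n kap, stmt_at P T (kG P G T t) <> Some (@await Register Value Location n kap).
Proof.
move=> wfP /is_end_await_step[run_te [n0 [kap0 aw_te]]].
rewrite /startG /await_len aw_te => /andP[ge_t lt_t] n kap aw_t.
have aw_at_t : await_at P G T t by apply/await_atP; exists n, kap.
have [s /andP[ge_s lt_s] [aw_s last_s]] := last_in_range lt_t aw_at_t.
apply: (no_last_await_in_window wfP run_te aw_te _ aw_s last_s).
by rewrite lt_s andbT (leq_trans ge_t ge_s).
Qed.
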